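(* Let $\alpha>1$ and $D,R_{tot},L_0>0$. Let $(k_{nf}^0,k_{pf}^0)$ and $(k_{nf}^1,k_{pf}^1)$ be two pairs of positive parameters, and suppose a function $R\in C^2([-L_0,L_0])$ that is positive on $(-L_0,L_0)$ and not constant solves $$-D R''(x)=-k_{nf}R(x)+k_{pf}R(x)^{\alpha}\Big(1-\frac{1}{R_{tot}}\int_{-L_0}^{L_0}R(s)\,ds\Big),\qquad R(\pm L_0)=0,$$ both for $(k_{nf},k_{pf})=(k_{nf}^0,k_{pf}^0)$ and for $(k_{nf},k_{pf})=(k_{nf}^1,k_{pf}^1)$, with $\int_{-L_0}^{L_0}R<R_{tot}$. Then $k_{nf}^0=k_{nf}^1$ and $k_{pf}^0=k_{pf}^1$.
   Context: All constants are fixed and positive, with $\alpha>1$. *)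

From Stdlib Require Import Reals.
Open Scope R_scope.

Definition deriv_on (a b : R) (f f' : R -> R) : Prop :=
  forall x, a <= x <= b ->
    limit1_in (fun h => (f (x + h) - f x) / h)
              (fun h => h <> 0 /\ a <= x + h <= b) (f' x) 0.

Definition cont_on (a b : R) (g : R -> R) : Prop :=
  forall x, a <= x <= b ->
    limit1_in g (fun y => a <= y <= b) (g x) x.

Definition C2_on (a b : R) (f f1 f2 : R -> R) : Prop :=
  deriv_on a b f f1 /\ deriv_on a b f1 f2 /\ cont_on a b f2.

(* x^alpha for x >= 0 (0^alpha = 0 since alpha > 0); negative x never occurs. *)
Definition rpow (x alpha : R) : R :=
  if Rle_dec x 0 then 0 else Rpower x alpha.

(* The nonlocal steady-state problem with parameters (knf,kpf), given the
   value I of the integral of R over [-L0,L0]. *)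
Definition solves (D Rtot L0 alpha knf kpf I : R) (f f2 : R -> R) : Prop :=
  (forall x, -L0 <= x <= L0 ->
     - D * f2 x = - knf * f x + kpf * rpow (f x) alpha * (1 - I / Rtot))
  /\ f (-L0) = 0 /\ f L0 = 0.

From Stdlib Require Import Reals Lra Classical.
Open Scope R_scope.

(* Subtracting the two equations at a point x of (-L0,L0), where f x > 0,
   gives (knf1 - knf0) f x = (kpf1 - kpf0) c f x ^ alpha with
   c = 1 - (int f)/Rtot > 0. If the parameter pairs differed, this would force
   f x ^ (alpha - 1) to be the same number at every interior point, i.e. f
   constant on (-L0,L0); being differentiable up to the boundary, f would then
   equal that positive constant at -L0, contradicting f(-L0) = 0. *)

Lemma deriv_on_increment_lim (a b : R) (f f' : R -> R) (x : R) :
  deriv_on a b f f' -> a <= x <= b ->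
  limit1_in (fun h => f (x + h) - f x) (fun h => h <> 0 /\ a <= x + h <= b) 0 0.
Proof.
  intros Hd Hx.
  replace 0 with (f' x * 0) at 1 by ring.
  apply limit1_ext with (fun h => (f (x + h) - f x) / h * h).
  - intros h [Hh _]. field. exact Hh.
  - apply limit_mul; [exact (Hd x Hx) | apply lim_x].
Qed.

Lemma deriv_on_const_interior_left (a b p : R) (f f' : R -> R) :
  a < b -> deriv_on a b f f' -> (forall z, a < z < b -> f z = p) -> f a = p.
Proof.
  intros Hab Hd Hc.
  apply NNPP; intro Hne.
  assert (Heps : 0 < Rabs (p - f a)) by (apply Rabs_pos_lt; lra).
  destruct (deriv_on_increment_lim a b f f' a Hd ltac:(lra) _ Heps)
    as [delta [Hdelta Hlim]].
  set (h := Rmin (delta / 2) ((b - a) / 2)).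
  assert (Hh0 : 0 < h) by (apply Rmin_pos; lra).
  assert (Hh1 : h <= delta / 2) by apply Rmin_l.
  assert (Hh2 : h <= (b - a) / 2) by apply Rmin_r.
  specialize (Hlim h).
  simpl in Hlim; unfold R_dist in Hlim.
  rewrite Hc, Rminus_0_r, Rminus_0_r, Rabs_right in Hlim by lra.
  assert (Rabs (p - f a) < Rabs (p - f a)) by (apply Hlim; repeat split; lra).
  lra.
Qed.

Lemma deriv_on_interior_values_neq (a b : R) (f f' : R -> R) :
  a < b -> deriv_on a b f f' -> f a = 0 -> (forall z, a < z < b -> 0 < f z) ->
  exists u v, a < u < b /\ a < v < b /\ f u <> f v.
Proof.
  intros Hab Hd Ha Hpos.
  set (m := (a + b) / 2).
  destruct (classic (forall z, a < z < b -> f z = f m)) as [Hc | Hnc].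
  - pose proof (deriv_on_const_interior_left a b (f m) f f' Hab Hd Hc).
    assert (0 < f m) by (apply Hpos; unfold m; lra).
    lra.
  - apply not_all_ex_not in Hnc as [z Hz].
    apply imply_to_and in Hz as [Hz Hne].
    exists z, m. repeat split; unfold m in *; lra.
Qed.

Lemma Rpower_inj_l (x y e : R) :
  0 < x -> 0 < y -> e <> 0 -> Rpower x e = Rpower y e -> x = y.
Proof.
  intros Hx Hy He Heq.
  apply ln_inv; [exact Hx | exact Hy |].
  apply (f_equal ln) in Heq. rewrite !ln_Rpower in Heq.
  exact (Rmult_eq_reg_l e _ _ Heq He).
Qed.

Lemma linear_power_coeffs_zero (alpha k p x y : R) :
  alpha <> 1 -> 0 < x -> 0 < y -> x <> y ->
  k * x = p * Rpower x alpha -> k * y = p * Rpower y alpha ->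
  k = 0 /\ p = 0.
Proof.
  intros Halpha Hx Hy Hxy Ex Ey.
  set (beta := alpha - 1).
  assert (Hsplit : forall z, 0 < z -> Rpower z alpha = z * Rpower z beta).
  { intros z Hz. replace alpha with (1 + beta) at 1 by (unfold beta; ring).
    rewrite Rpower_plus, Rpower_1 by exact Hz. reflexivity. }
  rewrite Hsplit in Ex, Ey by assumption.
  assert (Kx : k = p * Rpower x beta) by (apply (Rmult_eq_reg_l x); nra).
  assert (Ky : k = p * Rpower y beta) by (apply (Rmult_eq_reg_l y); nra).
  assert (Hneq : Rpower x beta <> Rpower y beta).
  { intro Heq. apply Hxy. apply (Rpower_inj_l x y beta); unfold beta in *; auto; lra. }
  assert (Hp : p = 0).
  { apply (Rmult_eq_reg_r (Rpower x beta - Rpower y beta)); [nra | lra]. }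
  split; [rewrite Kx, Hp; ring | exact Hp].
Qed.

Theorem mainTheorem6
  (alpha D Rtot L0 knf0 kpf0 knf1 kpf1 : R)
  (Halpha : 1 < alpha) (HD : 0 < D) (HRtot : 0 < Rtot) (HL0 : 0 < L0)
  (Hknf0 : 0 < knf0) (Hkpf0 : 0 < kpf0) (Hknf1 : 0 < knf1) (Hkpf1 : 0 < kpf1)
  (f f1 f2 : R -> R)
  (HC2 : C2_on (-L0) L0 f f1 f2)
  (Hpos : forall x, -L0 < x < L0 -> 0 < f x)
  (Hnonconst : exists x y, -L0 <= x <= L0 /\ -L0 <= y <= L0 /\ f x <> f y)
  (pr : Riemann_integrable f (-L0) L0)
  (Hint : RiemannInt pr < Rtot)
  (Hsol0 : solves D Rtot L0 alpha knf0 kpf0 (RiemannInt pr) f f2)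
  (Hsol1 : solves D Rtot L0 alpha knf1 kpf1 (RiemannInt pr) f f2) :
  knf0 = knf1 /\ kpf0 = kpf1.
Proof.
  destruct HC2 as [Hd _].
  destruct Hsol0 as [E0 [Hleft _]], Hsol1 as [E1 _].
  set (c := 1 - RiemannInt pr / Rtot).
  assert (Hc : 0 < c).
  { unfold c. apply Rlt_Rminus, (Rmult_lt_reg_r Rtot); [lra |].
    unfold Rdiv. rewrite Rmult_assoc, Rinv_l; lra. }
  assert (Hdiff : forall z, -L0 < z < L0 ->
            (knf1 - knf0) * f z = (kpf1 - kpf0) * c * Rpower (f z) alpha).
  { intros z Hz.
    pose proof (E0 z ltac:(lra)) as e0. pose proof (E1 z ltac:(lra)) as e1.
    unfold rpow in e0, e1.
    destruct (Rle_dec (f z) 0); [pose proof (Hpos z Hz); lra |].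
    fold c in e0, e1. lra. }
  destruct (deriv_on_interior_values_neq (-L0) L0 f f1 ltac:(lra) Hd Hleft Hpos)
    as [u [v [Hu [Hv Huv]]]].
  destruct (linear_power_coeffs_zero alpha (knf1 - knf0) ((kpf1 - kpf0) * c)
              (f u) (f v) ltac:(lra) (Hpos u Hu) (Hpos v Hv) Huv
              (Hdiff u Hu) (Hdiff v Hv)) as [Hk Hp].
  apply Rmult_integral in Hp as [Hp | Hp]; split; lra.
Qed.
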